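(* Let $K\ge 2$, let $\mathcal V=\{\mathbf v\in\{0,1\}^K:\sum_i \mathbf v_i=1\}$ be the set of one-hot vectors, let $\boldsymbol\pi$ be a probability vector on $K$ categories, and let $(\alpha_t)_{t\in[0,1]}$ be a noise schedule with values in $[0,1]$, monotonically decreasing in $t$, with $\alpha_1=0$ and $\alpha_t>0$ for $t<1$. Fix $\mathbf x\in\mathcal V$ and define the forward marginals $q_t(\cdot\mid \mathbf x)=\mathrm{Cat}(\cdot;\alpha_t\mathbf x+(1-\alpha_t)\boldsymbol\pi)$. For $0\le s<t\le 1$ let $q_{s|t}(\cdot\mid \mathbf z_t,\mathbf x)$ denote the true reverse posterior of the Markovian forward process, i.e. $q_{s|t}(\mathbf z_s\mid\mathbf z_t,\mathbf x)=q_{t|s}(\mathbf z_t\mid\mathbf z_s)\,q_s(\mathbf z_s\mid\mathbf x)/q_t(\mathbf z_t\mid\mathbf x)$ with forward transition $q_{t|s}(\cdot\mid\mathbf z_s)=\mathrm{Cat}(\cdot;\tfrac{\alpha_t}{\alpha_s}\mathbf z_s+(1-\tfrac{\alpha_t}{\alpha_s})\boldsymbol\pi)$. Let $T\ge1$, $t(i)=i/T$ for $0\le i\le T$, and let $(\kappa_t)$ be numbers in $[0,1]$. Define the $\Psi$-posteriors $$\Psi_{s|t}(\cdot\mid\mathbf x,\mathbf z_t)=\kappa_t\,q_{s|t}(\cdot\mid\mathbf z_t,\mathbf x)+(1-\kappa_t)\,q_s(\cdot\mid\mathbf x)$$ for $(s,t)=(t(i-1),t(i))$, $\Psi_1(\cdot\mid\mathbf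 x)=\mathrm{Cat}(\cdot;\boldsymbol\pi)$, and define the marginals recursively by $\Psi_{t(i-1)}(\mathbf z_s\mid\mathbf x)=\sum_{\tilde{\mathbf z}_t\in\mathcal V}\Psi_{t(i)}(\tilde{\mathbf z}_t\mid\mathbf x)\,\Psi_{t(i-1)|t(i)}(\mathbf z_s\mid\tilde{\mathbf z}_t,\mathbf x)$. Then for every $0\le i\le T$, $\Psi_{t(i)}(\cdot\mid\mathbf x)=q_{t(i)}(\cdot\mid\mathbf x)$.
   Context: $\mathrm{Cat}(\cdot;\mathbf v)$ is the categorical distribution on $\mathcal V$ assigning probability $\mathbf v_i$ to the $i$-th one-hot vector. The construction is applied independently to each token of a sequence; the statement concerns a single token. *)

From mathcomp Require Import all_boot all_order all_algebra.
Set Implicit Arguments. Unset Strict Implicit. Unset Printing Implicit Defensive.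
Import Order.TTheory GRing.Theory Num.Theory.
Local Open Scope ring_scope.

Section Defs.
Variables (R : realFieldType) (K : nat).

(* A one-hot vector e_j in V is identified with its index j : 'I_K;
   [onehot j] is the corresponding vector of {0,1}^K. *)
Definition onehot (j : 'I_K) : 'I_K -> R := fun i => (i == j)%:R.

Definition Cat (v : 'I_K -> R) (j : 'I_K) : R := v j.

Definition is_prob_vec (p : 'I_K -> R) : Prop :=
  (forall j, 0 <= p j) /\ \sum_j p j = 1.

Variables (alpha : R -> R) (pi : 'I_K -> R).

Definition q_marg (t : R) (x z : 'I_K) : R :=
  Cat (fun i => alpha t * onehot x i + (1 - alpha t) * pi i) z.

Definition q_trans (s t : R) (zs zt : 'I_K) : R :=
  Cat (fun i => alpha t / alpha s * onehot zs i + (1 - alpha t / alpha s) * pi i) zt.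

Definition q_post (s t : R) (x zt zs : 'I_K) : R :=
  q_trans s t zs zt * q_marg s x zs / q_marg t x zt.

Variable (kappa : R -> R).

Definition Psi_post (s t : R) (x zt zs : 'I_K) : R :=
  kappa t * q_post s t x zt zs + (1 - kappa t) * q_marg s x zs.

Variable (T : nat).

Definition tgrid (i : nat) : R := i%:R / T%:R.

(* Psi_rec n x = marginal Psi_{t(T - n)}(. | x), defined by backward recursion
   from Psi_1 = Cat(. ; pi). *)
Fixpoint Psi_rec (n : nat) (x : 'I_K) : 'I_K -> R :=
  match n with
  | 0%N => fun z => Cat pi z
  | n'.+1 => fun zs =>
      \sum_(zt < K) Psi_rec n' x zt *
        Psi_post (tgrid (T - n').-1) (tgrid (T - n')) x zt zs
  end.

Definition Psi_marg (i : nat) (x z : 'I_K) : R := Psi_rec (T - i) x z.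

End Defs.

From mathcomp Require Import all_boot all_order all_algebra.
From mathcomp Require Import ring.
Set Implicit Arguments. Unset Strict Implicit. Unset Printing Implicit Defensive.
Import Order.TTheory GRing.Theory Num.Theory.
Local Open Scope ring_scope.

(* Noising a one-hot vector with strength a
   and then with strength b is noising it with strength a b, so
   q_t = sum_zs q_s(zs) q_{t|s}(. | zs).  Hence q_{s|t} is the Bayes posterior
   of the joint law q_s(zs) q_{t|s}(zt | zs), and averaging it against q_t
   returns q_s.  If the Psi-marginal at t is q_t, the Psi-marginal at s is then
   kappa_t q_s + (1 - kappa_t) q_s = q_s, whatever kappa_t is. *)

Section Bayes.
Variables (R : realFieldType) (I : finType).

(* Where the marginal [m j] vanishes the posterior is the junk value [_ / 0 = 0],
   which is harmless because the joint mass at [j] is then 0 as well. *)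
Lemma sum_marginal_posterior (p : I -> R) (k : I -> I -> R) (i : I) :
  (forall h, 0 <= p h) -> (forall h j, 0 <= k h j) ->
  (forall h, \sum_j k h j = 1) ->
  let m j := \sum_h p h * k h j in
  \sum_j m j * (k i j * p i / m j) = p i.
Proof.
move=> p_ge0 k_ge0 k_sum1 m.
have joint_posterior j : m j * (k i j * p i / m j) = k i j * p i.
  have [m0 | m_neq0] := eqVneq (m j) 0; last by rewrite mulrC divfK.
  have /psumr_eq0P joint0 := m0.
  by rewrite m0 mul0r mulrC joint0 // => h _; rewrite mulr_ge0.
by under eq_bigr do rewrite joint_posterior; rewrite -mulr_suml k_sum1 mul1r.
Qed.

End Bayes.

Section Mixture.
Variables (R : realFieldType) (K : nat) (pi : 'I_K -> R).
Hypothesis pi_prob : is_prob_vec pi.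

(* [q_marg alpha pi t x] and [q_trans alpha pi s t zs] are convertible to
   [mix pi (alpha t) x] and [mix pi (alpha t / alpha s) zs]. *)
Definition mix (a : R) (y : 'I_K) (i : 'I_K) : R := a * onehot R y i + (1 - a) * pi i.

Lemma sum_onehot_mul (y : 'I_K) (f : 'I_K -> R) : \sum_i onehot R y i * f i = f y.
Proof.
rewrite (bigD1 y) //= /onehot eqxx mul1r big1 ?addr0 // => i /negbTE ->.
by rewrite mul0r.
Qed.

Lemma sum_mix (a : R) (y : 'I_K) : \sum_i mix a y i = 1.
Proof.
case: pi_prob => _ pi_sum1.
rewrite big_split /= -!mulr_sumr pi_sum1.
under eq_bigr do rewrite -[onehot R y _]mulr1.
by rewrite sum_onehot_mul; ring.
Qed.

Lemma mix_ge0 (a : R) (y i : 'I_K) : 0 <= a <= 1 -> 0 <= mix a y i.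
Proof.
case/andP=> a_ge0 a_le1; case: pi_prob => pi_ge0 _.
by rewrite addr_ge0 ?mulr_ge0 ?subr_ge0 ?pi_ge0 // /onehot ler0n.
Qed.

Lemma sum_mix_mul (a b : R) (x w : 'I_K) :
  \sum_z mix a x z * mix b z w = mix (a * b) x w.
Proof.
case: pi_prob => _ pi_sum1.
have onehotC (y z : 'I_K) : onehot R y z = onehot R z y by rewrite /onehot eq_sym.
transitivity (\sum_z (onehot R x z * (a * mix b z w)
    + onehot R w z * ((1 - a) * b * pi z) + pi z * ((1 - a) * (1 - b) * pi w))).
  by apply: eq_bigr => z _; rewrite /mix (onehotC z w); ring.
by rewrite !big_split /= !sum_onehot_mul -mulr_suml pi_sum1 /mix; ring.
Qed.

End Mixture.

Lemma sum_Psi_post (R : realFieldType) (K : nat) (pi : 'I_K -> R)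
    (alpha kappa : R -> R) (s t : R) (x zs : 'I_K) :
  is_prob_vec pi -> 0 < alpha s <= 1 -> 0 <= alpha t <= alpha s ->
  \sum_zt q_marg alpha pi t x zt * Psi_post alpha pi kappa s t x zt zs
    = q_marg alpha pi s x zs.
Proof.
move=> pi_prob /andP[as_gt0 as_le1] /andP[at_ge0 at_le_as].
have r01 : 0 <= alpha t / alpha s <= 1.
  by rewrite divr_ge0 ?(ltW as_gt0) //= ler_pdivrMr // mul1r.
have q_t_marginal zt :
    q_marg alpha pi t x zt = \sum_a q_marg alpha pi s x a * q_trans alpha pi s t a zt.
  by rewrite sum_mix_mul // mulrC divfK ?gt_eqF.
have bayes : \sum_zt q_marg alpha pi t x zt * q_post alpha pi s t x zt zs
               = q_marg alpha pi s x zs.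
  rewrite /q_post; under eq_bigr do rewrite q_t_marginal.
  apply: (sum_marginal_posterior (p := q_marg alpha pi s x) (k := q_trans alpha pi s t)).
  - by move=> h; apply: mix_ge0 => //; rewrite (ltW as_gt0).
  - by move=> h j; apply: mix_ge0.
  - by move=> h; apply: sum_mix.
have q_t_sum1 : \sum_zt q_marg alpha pi t x zt = 1 by apply: sum_mix.
transitivity (\sum_zt (kappa t * (q_marg alpha pi t x zt * q_post alpha pi s t x zt zs)
    + (1 - kappa t) * q_marg alpha pi s x zs * q_marg alpha pi t x zt)).
  by apply: eq_bigr => zt _; rewrite /Psi_post; ring.
by rewrite big_split /= -!mulr_sumr bayes q_t_sum1; ring.
Qed.

Section Grid.
Variables (R : realFieldType) (T : nat).
Hypothesis T_gt0 : (0 < T)%N.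

Lemma tgrid_ge0 (i : nat) : 0 <= tgrid R T i.
Proof. by rewrite divr_ge0. Qed.

Lemma tgrid_le (i j : nat) : (i <= j)%N -> tgrid R T i <= tgrid R T j.
Proof. by move=> ij; rewrite ler_wpM2r ?invr_ge0 // ler_nat. Qed.

Lemma tgridT : tgrid R T T = 1.
Proof. by rewrite /tgrid divff // pnatr_eq0 -lt0n. Qed.

Lemma tgrid_le1 (i : nat) : (i <= T)%N -> tgrid R T i <= 1.
Proof. by rewrite -tgridT; apply: tgrid_le. Qed.

Lemma tgrid_lt1 (i : nat) : (i < T)%N -> tgrid R T i < 1.
Proof. by move=> iT; rewrite /tgrid ltr_pdivrMr ?ltr0n // mul1r ltr_nat. Qed.

End Grid.

Section PsiRecursion.
Variables (R : realFieldType) (K : nat) (pi : 'I_K -> R).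
Variables (alpha kappa : R -> R) (T : nat).
Hypothesis pi_prob : is_prob_vec pi.
Hypothesis alpha_grid_pos : forall i, (i < T)%N -> 0 < alpha (tgrid R T i) <= 1.
Hypothesis alpha_grid_step :
  forall i, (i < T)%N -> 0 <= alpha (tgrid R T i.+1) <= alpha (tgrid R T i).
Hypothesis alpha_grid_end : alpha (tgrid R T T) = 0.

Lemma Psi_rec_q_marg (n : nat) (x z : 'I_K) : (n <= T)%N ->
  Psi_rec alpha pi kappa T n x z = q_marg alpha pi (tgrid R T (T - n)) x z.
Proof.
elim: n z => [|n IH] z nT.
  by rewrite subn0 /q_marg /Cat alpha_grid_end mul0r add0r subr0 mul1r.
have iT : (T - n.+1 < T)%N by rewrite ltn_subrL; apply: leq_trans nT.
have Tn : (T - n = (T - n.+1).+1)%N by rewrite subnSK.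
rewrite [LHS]/= Tn succnK.
under eq_bigr do rewrite IH ?(ltnW nT) // Tn.
exact: sum_Psi_post (alpha_grid_pos iT) (alpha_grid_step iT).
Qed.

End PsiRecursion.

Theorem mainTheorem1 (R : realFieldType) (K : nat) (pi : 'I_K -> R)
  (alpha kappa : R -> R) (T : nat) (x : 'I_K) :
  (2 <= K)%N ->
  is_prob_vec pi ->
  (forall t, 0 <= t <= 1 -> 0 <= alpha t <= 1) ->
  (forall s t, 0 <= s -> s <= t -> t <= 1 -> alpha t <= alpha s) ->
  alpha 1 = 0 ->
  (forall t, 0 <= t < 1 -> 0 < alpha t) ->
  (1 <= T)%N ->
  (forall i, (i <= T)%N -> 0 <= kappa (tgrid R T i) <= 1) ->
  forall i, (i <= T)%N -> forall z : 'I_K,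
    Psi_marg alpha pi kappa T i x z = q_marg alpha pi (tgrid R T i) x z.
Proof.
move=> _ pi_prob alpha01 alpha_mono alpha1 alpha_pos T_gt0 _ i iT z.
have grid01 j : (j <= T)%N -> 0 <= tgrid R T j <= 1.
  by move=> jT; rewrite tgrid_ge0 tgrid_le1.
rewrite /Psi_marg Psi_rec_q_marg ?subKn ?leq_subr // => [j jT|j jT|].
- have /andP[_ ->] := alpha01 _ (grid01 _ (ltnW jT)).
  by rewrite alpha_pos // tgrid_ge0 tgrid_lt1.
- have /andP[-> _] := alpha01 _ (grid01 _ jT).
  by rewrite alpha_mono ?tgrid_ge0 ?tgrid_le ?tgrid_le1.
- by rewrite tgridT.
Qed.
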